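(* Assume the standing hypotheses and fix a constant $C_1>0$. Then there exist $\rho>0$, $\bar\mu\in(0,\hat\mu]$ and constants $0<c\le C$ (independent of $\mu$ and $(x,\lambda)$) such that for every $\mu\in(0,\bar\mu]$ and every $(x,\lambda)\in\mathcal B((x^*,\lambda^* ),\delta)$ with $x>0$, $\lambda>0$, $\|(x,\lambda)-(x^\mu,\lambda^\mu)\|<\rho$ and $\|F_\mu(x,\lambda)\|\le C_1\mu$, one has $$x_i\le C\mu \ \ (i\in\mathcal A),\qquad c\le x_i\le C\ \ (i\in\mathcal I),\qquad c\le \lambda_i\le C\ \ (i\in\mathcal A),\qquad \lambda_i\le C\mu\ \ (i\in\mathcal I).$$ That is, $x_i=\mathcal O(\mu)$, $\lambda_i=\Theta(1)$ for $i\in\mathcal A$ and $x_i=\Theta(1)$, $\lambda_i=\mathcal O(\mu)$ for $i\in\mathcal I$.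
   Context: Problem: minimize $f(x)$ subject to $x\ge 0$, where $f:\mathbb R^n\to\mathbb R$ is twice continuously differentiable with locally Lipschitz continuous Hessian. All norms are Euclidean; $e$ is the all-ones vector; for vectors $x,\lambda$, $X=\mathrm{diag}(x)$, $\Lambda=\mathrm{diag}(\lambda)$. For $\mu\in\mathbb R$ define $F_\mu:\mathbb R^{2n}\to\mathbb R^{2n}$ by $F_\mu(x,\lambda)=\begin{bmatrix}\nabla f(x)-\lambda\\ \Lambda X e-\mu e\end{bmatrix}$, with Jacobian (independent of $\mu$) $F'(x,\lambda)=\begin{bmatrix}H&-I\\ \Lambda&X\end{bmatrix}$, $H=\nabla^2 f(x)$. Standing hypotheses: $(x^*,\lambda^* )$ satisfies $\nabla f(x^* )=\lambda^*$, $x^*\ge0$, $\lambda^*\ge0$, $x^*_i\lambda^*_i=0$ for all $i$, $x^*+\lambda^*>0$ (strict complementarity), and the second-order condition $[\nabla^2 f(x^* )]_{\mathcal I\mathcal I}\succ 0$. Here $\mathcal A=\{i:x^*_i=0\}$ (active set) and $\mathcal I=\{i:x^*_i>0\}$ (inactive set); for a matrix/vector, subscripts $\mathcal A,\mathcal I$ denote the corresponding row/column sub-blocks. Further, $\delta>0$ is such that $F'$ is nonsingular on $\mathcal B((x^*,\lambda^* ),\delta)=\{(x,\lambda):\|(x,\lambda)-(x^*,\lambda^* )\|<\delta\}$ with $\|F'(x,\lambda)^{-1}\|\le M$ there, and $\hat\mu>0$ is such that for $\mu\in(0,\hat\mu]$ there is a Lipschitz continuous map $\mu\mapsto(x^\mu,\lambda^\mu)\in\mathcal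 B((x^*,\lambda^* ),\delta)$ (the barrier trajectory) with $F_\mu(x^\mu,\lambda^\mu)=0$ and $\|(x^\mu,\lambda^\mu)-(x^*,\lambda^* )\|\le C_4\mu$ for a constant $C_4$. *)

From HB Require Import structures.
From mathcomp Require Import all_boot all_order all_algebra.
From mathcomp Require Import all_classical all_reals all_analysis.
Set Implicit Arguments. Unset Strict Implicit. Unset Printing Implicit Defensive.
Import Order.TTheory GRing.Theory Num.Theory.
Import numFieldNormedType.Exports.
Local Open Scope ring_scope.

Definition enorm (R : realType) (m p : nat) (A : 'M[R]_(m, p)) : R :=
  Num.sqrt (\sum_(i < m) \sum_(j < p) A i j ^+ 2).

Definition pair_v (R : realType) (n : nat) (x l : 'cV[R]_n) : 'cV[R]_(n + n) :=
  col_mx x l.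

Definition Fmu (R : realType) (n : nat) (g : 'cV[R]_n -> 'cV[R]_n) (mu : R)
  (x l : 'cV[R]_n) : 'cV[R]_(n + n) :=
  col_mx (g x - l) (\col_i (l i 0 * x i 0 - mu)).

Definition Fjac (R : realType) (n : nat) (Hs : 'cV[R]_n -> 'M[R]_n)
  (x l : 'cV[R]_n) : 'M[R]_(n + n) :=
  block_mx (Hs x) (- 1%:M) (diag_mx l^T) (diag_mx x^T).

From HB Require Import structures.
From mathcomp Require Import all_boot all_order all_algebra.
From mathcomp Require Import all_classical all_reals all_analysis.
From mathcomp Require Import ring lra.
Import Order.TTheory GRing.Theory Num.Theory.
Import numFieldNormedType.Exports.
Local Open Scope ring_scope.

(* Strict complementarity gives a margin [m > 0] with
   [m <= xs_i + ls_i] for every i, hence in each coordinate exactly one of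
   [xs_i], [ls_i] vanishes and the other is at least [m].  For [mu] small the
   barrier point [(xmu mu, lmu mu)] is within [m/4] of [(xs, ls)]
   (since its distance is at most [C4 * mu]); taking [rho = m/4], every
   coordinate of [(x, l)] is within [m/2] of the corresponding coordinate of
   [(xs, ls)].  So the "large" factor of the product [x_i * l_i] is squeezed
   in [[m/2, B + m]], and the residual bound [x_i l_i - mu <= C1 mu] forces
   the "small" factor below [2 (1 + C1) / m * mu]. *)

Lemma sum_ge_term {R : numDomainType} {I : finType} (F : I -> R) j :
  (forall i, 0 <= F i) -> F j <= \sum_i F i.
Proof. by move=> F_ge0; rewrite (bigD1 j) //= lerDl sumr_ge0. Qed.

Lemma enorm_entry {R : realType} {m p : nat} (A : 'M[R]_(m, p)) i j :
  `|A i j| <= enorm A.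
Proof.
have sq_ge0 k k' : 0 <= A k k' ^+ 2 by rewrite sqr_ge0.
rewrite /enorm -sqrtr_sqr ler_sqrt; last by do 2![apply: sumr_ge0 => ? _].
apply: le_trans (sum_ge_term (fun j' => A i j' ^+ 2) j (sq_ge0 i)) _.
apply: (sum_ge_term (fun k => \sum_j' A k j' ^+ 2)) => k; exact: sumr_ge0.
Qed.

Lemma enorm_coord_triangle {R : realType} {p : nat} {a b c : 'cV[R]_p} k {r r'} :
  enorm (a - b) < r -> enorm (b - c) <= r' -> `|a k 0 - c k 0| < r + r'.
Proof.
move=> ab bc.
have ab_k := enorm_entry (a - b) k 0; have bc_k := enorm_entry (b - c) k 0.
rewrite !mxE in ab_k bc_k.
have -> : a k 0 - c k 0 = (a k 0 - b k 0) + (b k 0 - c k 0)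
  by rewrite addrA subrK.
apply: le_lt_trans (ler_normD _ _) _.
by apply: ltr_leD; [exact: le_lt_trans ab_k ab | exact: le_trans bc_k bc].
Qed.

Lemma Fmu_compl_bound {R : realType} {n : nat} {g : 'cV[R]_n -> 'cV[R]_n}
    {mu r : R} {x l : 'cV[R]_n} i :
  enorm (Fmu g mu x l) <= r -> l i 0 * x i 0 - mu <= r.
Proof.
move=> Fr; have := enorm_entry (Fmu g mu x l) (rshift n i) 0.
rewrite /Fmu col_mxEd mxE => Fi.
exact: le_trans (ler_norm _) (le_trans Fi Fr).
Qed.

Lemma finite_pos_lower_bound {R : realFieldType} {I : finType} {s : I -> R} :
  (forall i, 0 < s i) -> exists2 m : R, 0 < m & forall i, m <= s i.
Proof.
move=> s_gt0; pose S := \sum_i (s i)^-1.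
have inv_ge0 i : 0 <= (s i)^-1 by rewrite invr_ge0 ltW.
have S1_gt0 : 0 < 1 + S by rewrite ltr_pwDl // sumr_ge0.
exists (1 + S)^-1; first by rewrite invr_gt0.
move=> i; rewrite -[s i]invrK lef_pV2 ?posrE ?invr_gt0 //.
by rewrite ler_wpDl // (sum_ge_term (fun k => (s k)^-1)).
Qed.

Lemma small_large_factor_bounds {R : realFieldType} {m mu C1 a b bs : R} :
  0 < m -> 0 < a -> m <= bs -> `|b - bs| < m / 2 -> a * b - mu <= C1 * mu ->
  [/\ m / 2 <= b, b <= bs + m / 2 & a <= 2 * (1 + C1) / m * mu].
Proof.
move=> m_gt0 a_gt0 m_le_bs; rewrite ltr_norml => /andP [b_lo b_hi] res.
have b_ge : m / 2 <= b by lra.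
split; [exact: b_ge | lra |].
have a_mb : a * (m / 2) <= a * b by rewrite ler_pM2l.
by rewrite mulrAC ler_pdivlMr //; lra.
Qed.

Theorem lemma4 (R : realType) (n : nat)
  (f : 'cV[R]_n -> R) (g : 'cV[R]_n -> 'cV[R]_n) (Hs : 'cV[R]_n -> 'M[R]_n)
  (* f is C^2 with gradient g and Hessian Hs *)
  (Hf : forall x, differentiable f x /\
          forall v, 'd f x v = \sum_(i < n) g x i 0 * v i 0)
  (Hg : forall x, differentiable g x /\ forall v, 'd g x v = Hs x *m v)
  (Hcont : continuous Hs)
  (* Hessian locally Lipschitz *)
  (Hlip : forall x, exists r : R, 0 < r /\ exists L : R, forall y z,
          enorm (y - x) < r -> enorm (z - x) < r ->
          enorm (Hs y - Hs z) <= L * enorm (y - z))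
  (xs ls : 'cV[R]_n)
  (* KKT point with strict complementarity *)
  (Hkkt1 : g xs = ls)
  (Hxs : forall i, 0 <= xs i 0) (Hls : forall i, 0 <= ls i 0)
  (Hcompl : forall i, xs i 0 * ls i 0 = 0)
  (Hstrict : forall i, 0 < xs i 0 + ls i 0)
  (* second-order condition: [Hess f(xs)]_II positive definite *)
  (Hsoc : forall v : 'cV[R]_n, v != 0 -> (forall i, xs i 0 = 0 -> v i 0 = 0) ->
          0 < (v^T *m Hs xs *m v) 0 0)
  (delta M : R) (Hdelta : 0 < delta)
  (Hnonsing : forall x l : 'cV[R]_n,
     enorm (pair_v x l - pair_v xs ls) < delta ->
     Fjac Hs x l \in unitmx /\
     forall w : 'cV[R]_(n + n), enorm (invmx (Fjac Hs x l) *m w) <= M * enorm w)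
  (muhat C4 : R) (Hmuhat : 0 < muhat)
  (xmu lmu : R -> 'cV[R]_n)
  (Htraj_lip : exists L : R, forall mu1 mu2, 0 < mu1 <= muhat -> 0 < mu2 <= muhat ->
     enorm (pair_v (xmu mu1) (lmu mu1) - pair_v (xmu mu2) (lmu mu2))
       <= L * `|mu1 - mu2|)
  (Htraj_ball : forall mu, 0 < mu <= muhat ->
     enorm (pair_v (xmu mu) (lmu mu) - pair_v xs ls) < delta)
  (Htraj_zero : forall mu, 0 < mu <= muhat -> Fmu g mu (xmu mu) (lmu mu) = 0)
  (Htraj_close : forall mu, 0 < mu <= muhat ->
     enorm (pair_v (xmu mu) (lmu mu) - pair_v xs ls) <= C4 * mu)
  (C1 : R) (HC1 : 0 < C1) :
  exists rho : R, exists mubar : R, exists c : R, exists C : R,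
    [/\ 0 < rho, 0 < mubar <= muhat, 0 < c, c <= C &
    forall mu, 0 < mu <= mubar ->
    forall x l : 'cV[R]_n,
      enorm (pair_v x l - pair_v xs ls) < delta ->
      (forall i, 0 < x i 0) -> (forall i, 0 < l i 0) ->
      enorm (pair_v x l - pair_v (xmu mu) (lmu mu)) < rho ->
      enorm (Fmu g mu x l) <= C1 * mu ->
      forall i,
        (xs i 0 = 0 -> x i 0 <= C * mu /\ c <= l i 0 <= C) /\
        (0 < xs i 0 -> c <= x i 0 <= C /\ l i 0 <= C * mu)].
Proof.
have [m m_gt0 margin] := finite_pos_lower_bound Hstrict.
pose B := \sum_i (xs i 0 + ls i 0).
have sB i : xs i 0 + ls i 0 <= B by apply: sum_ge_term => k; apply: ltW.
have B_ge0 : 0 <= B by apply: sumr_ge0 => k _; apply: ltW.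
pose K := 2 * (1 + C1) / m.
have K_gt0 : 0 < K by rewrite divr_gt0 //; lra.
pose D := 4 * (`|C4| + 1).
have D_gt0 : 0 < D by rewrite /D; have := normr_ge0 C4; lra.
exists (m / 4), (Num.min muhat (m / D)), (m / 2), (B + m + K).
split; [lra | by rewrite lt_min Hmuhat divr_gt0 //= ge_min lexx | lra |
        lra |].
move=> mu /andP [mu_gt0]; rewrite le_min => /andP [mu_le mu_le_mD].
move=> x l _ x_gt0 l_gt0 near_traj res i.
have traj_near : enorm (pair_v (xmu mu) (lmu mu) - pair_v xs ls) <= m / 4.
  apply: le_trans (Htraj_close mu _) _; first by rewrite mu_gt0.
  rewrite ler_pdivlMr // /D in mu_le_mD.
  apply: le_trans (ler_wpM2r (ltW mu_gt0) (ler_norm C4)) _.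
  have : `|C4| * mu <= (`|C4| + 1) * mu by rewrite ler_pM2r //; lra.
  lra.
have dx := enorm_coord_triangle (lshift n i) near_traj traj_near.
have dl := enorm_coord_triangle (rshift n i) near_traj traj_near.
rewrite /pair_v !col_mxEu in dx; rewrite /pair_v !col_mxEd in dl.
have half : m / 4 + m / 4 = m / 2 by field.
rewrite half in dx dl.
have res_i := Fmu_compl_bound i res.
have s_lo := margin i; have s_hi := sB i.
split=> [xs0 | xs_gt0].
- rewrite xs0 add0r in s_lo s_hi; rewrite xs0 subr0 in dx.
  rewrite mulrC in res_i.
  have [l_lo l_hi x_small] :=
    small_large_factor_bounds m_gt0 (x_gt0 i) s_lo dl res_i.
  by rewrite /K in K_gt0 *; split; [nra | apply/andP; split; lra].
- have ls0 : ls i 0 = 0 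
    by apply/eqP; move/eqP: (Hcompl i); rewrite mulf_eq0 gt_eqF.
  rewrite ls0 addr0 in s_lo s_hi; rewrite ls0 subr0 in dl.
  have [x_lo x_hi l_small] :=
    small_large_factor_bounds m_gt0 (l_gt0 i) s_lo dx res_i.
  by rewrite /K in K_gt0 *; split; [apply/andP; split; lra | nra].
Qed.
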